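(* Assume (B1)–(B3). Let $\lambda>0$, $c_k>0$, $p_{k-1}\in\mathbb{R}^\ell$, $z_{k-1}\in\mathbb{R}^n$, $\sigma_{k-1}>0$, set $L^\psi_{k-1}:=\lambda\Lambda(c_k,p_{k-1})+1$, and let $(z_k,v_k,\varepsilon_k)\in\mathbb{R}^n\times\mathbb{R}^n\times\mathbb{R}_+$ satisfy $$v_k\in\partial_{\varepsilon_k}\Big(\lambda\mathcal L_{c_k}(\cdot;p_{k-1})+\tfrac12\|\cdot-z_{k-1}\|^2\Big)(z_k),\qquad \|v_k\|^2+2\varepsilon_k\le\sigma_{k-1}^2\|v_k+z_{k-1}-z_k\|^2.$$ Define $\delta_k:=\varepsilon_k/\lambda$, $r_k:=v_k+z_{k-1}-z_k$, $$\hat z_k:=\mathrm{argmin}_u\Big\{\lambda\big[\langle\nabla_z\widetilde{\mathcal L}_{c_k}(z_k;p_{k-1}),u-z_k\rangle+h(u)\big]-\langle r_k,u-z_k\rangle+\tfrac{L^\psi_{k-1}}{2}\|u-z_k\|^2\Big\},$$ $w_k:=\frac1\lambda[r_k+L^\psi_{k-1}(z_k-\hat z_k)]$, $p_k:=\Pi_{\mathcal K^*}(p_{k-1}+c_kg(z_k))$, $\hat p_k:=\Pi_{\mathcal K^*}(p_{k-1}+c_kg(\hat z_k))$, $\hat q_k:=\frac{1}{c_k}(p_{k-1}-\hat p_k)$, and $\hat w_k:=w_k+\nabla_z\widetilde{\mathcal L}_{c_k}(\hat z_k;p_{k-1})-\nabla_z\widetilde{\mathcal L}_{c_k}(z_k;p_{k-1})$.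 Then: (a) $w_k\in\nabla f(z_k)+\partial_{\delta_k}h(z_k)+\nabla g(z_k)p_k$, $\ \|w_k\|\le\frac1\lambda\big(1+\sigma_{k-1}\sqrt{L^\psi_{k-1}}\big)\|r_k\|$, and $\delta_k\le\frac{1}{2\lambda}\sigma_{k-1}^2\|r_k\|^2$; (b) $\hat w_k\in\nabla f(\hat z_k)+\partial h(\hat z_k)+\nabla g(\hat z_k)\hat p_k$, $\ \langle g(\hat z_k)+\hat q_k,\hat p_k\rangle=0$, $\ g(\hat z_k)+\hat q_k\preceq_{\mathcal K}0$, $\ \hat p_k\succeq_{\mathcal K^*}0$, and $$\|\hat w_k\|\le\frac1\lambda\big(1+2\sigma_{k-1}\sqrt{L^\psi_{k-1}}\big)\|r_k\|,\qquad \|\hat q_k\|\le\frac{B_g^{(1)}\sigma_{k-1}}{\sqrt{L^\psi_{k-1}}}\|r_k\|+\frac1{c_k}\|p_k-p_{k-1}\|.$$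
   Context: $\mathcal K\subseteq\mathbb{R}^\ell$ is a nonempty closed convex cone, $\mathcal K^*=\{y:\langle y,x\rangle\ge0\ \forall x\in\mathcal K\}$ its dual cone, $u\preceq_{\mathcal K}v$ means $v-u\in\mathcal K$, $\Pi_S$ is the Euclidean projection onto a closed convex set $S$ and $\mathrm{dist}(y,S)$ the Euclidean distance. For a proper function $\varphi$, $\partial_\varepsilon\varphi(z):=\{u:\varphi(z')\ge\varphi(z)+\langle u,z'-z\rangle-\varepsilon\ \forall z'\}$ and $\partial\varphi=\partial_0\varphi$. For differentiable $g:\mathbb{R}^n\to\mathbb{R}^\ell$, $\nabla g(z)\in\mathbb{R}^{n\times\ell}$ is the transpose of the Jacobian, with operator norm $\|\nabla g(z)\|$. $g$ is $\mathcal K$-convex if $g(tz'+(1-t)z)-tg(z')-(1-t)g(z)\preceq_{\mathcal K}0$ for all $z,z'$, $t\in[0,1]$. (B1) $h:\mathbb{R}^n\to(-\infty,\infty]$ is proper, lower semicontinuous, convex, and $K_h$-Lipschitz continuous on its domain for some $K_h>0$; $\mathcal H:=\mathrm{dom}\,h$ is compact with diameter $D_h$. (B2) $f$ is (not necessarily convex and) differentiable on an open set containing $\mathcal H$, and there are $m_f,L_f>0$ with $f(z')-f(z)-\langle\nabla f(z),z'-z\rangle\ge-\frac{m_f}{2}\|z'-z\|^2$ and $\|\nabla f(z')-\nabla f(z)\|\le L_f\|z'-z\|$ for all $z,z'\in\mathcal H$. (B3) $g:\mathbb{R}^n\to\mathbb{R}^\ell$ is $\mathcal K$-convex and differentiable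 with $L_g$-Lipschitz $\nabla g$ on $\mathbb{R}^n$, $L_g>0$. Constants: $B_g^{(0)}:=\sup_{\mathcal H}\|g\|$, $B_g^{(1)}:=\sup_{\mathcal H}\|\nabla g\|$. Functions: $\mathcal L_c(z;p):=f(z)+h(z)+\frac1{2c}[\mathrm{dist}^2(p+cg(z),-\mathcal K)-\|p\|^2]$ (augmented Lagrangian), $\widetilde{\mathcal L}_c(z;p):=f(z)+\frac1{2c}[\mathrm{dist}^2(p+cg(z),-\mathcal K)-\|p\|^2]$, whose $z$-gradient is $\nabla_z\widetilde{\mathcal L}_c(z;p)=\nabla f(z)+\nabla g(z)\Pi_{\mathcal K^*}(p+cg(z))$, and $\Lambda(c,p):=L_f+L_g\|p\|+c(B_g^{(0)}L_g+[B_g^{(1)}]^2)$. *)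

From HB Require Import structures.
From mathcomp Require Import all_boot all_order all_algebra.
From mathcomp Require Import all_classical all_reals all_analysis.
Set Implicit Arguments. Unset Strict Implicit. Unset Printing Implicit Defensive.
Import Order.TTheory GRing.Theory Num.Theory numFieldNormedType.Exports.
Local Open Scope classical_set_scope.
Local Open Scope ring_scope.

Section Defs.
Variable R : realType.

Definition dotv {m : nat} (u v : 'cV[R]_m) : R := \sum_(i < m) u i 0 * v i 0.
Definition enorm {m : nat} (u : 'cV[R]_m) : R := Num.sqrt (dotv u u).

Definition opnorm {n l : nat} (M : 'M[R]_(n, l)) : R :=
  sup [set enorm (M *m x) | x in [set x : 'cV[R]_l | enorm x <= 1]].

Definition edist {m : nat} (y : 'cV[R]_m) (S : set 'cV[R]_m) : R :=
  inf [set enorm (y - s) | s in S].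

(* Euclidean projection onto S (the nearest point; unique when S is a
   nonempty closed convex set) *)
Definition eproj {m : nat} (S : set 'cV[R]_m) (y : 'cV[R]_m) : 'cV[R]_m :=
  xget 0 [set x | S x /\ forall s, S s -> enorm (y - x) <= enorm (y - s)].

Definition dual_cone {m : nat} (K : set 'cV[R]_m) : set 'cV[R]_m :=
  [set y | forall x, K x -> 0 <= dotv y x].

Definition negset {m : nat} (K : set 'cV[R]_m) : set 'cV[R]_m := [set x | K (- x)].

Definition closed_convex_cone {m : nat} (K : set 'cV[R]_m) : Prop :=
  [/\ K !=set0, closed K,
      (forall x t, K x -> 0 <= t -> K (t *: x)) &
      (forall x y t, K x -> K y -> 0 <= t <= 1 -> K (t *: x + (1 - t) *: y))].

Definition has_grad {n : nat} (f : 'cV[R]_n -> R) (gf : 'cV[R]_n) (z : 'cV[R]_n) : Prop :=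
  forall e : R, 0 < e -> exists d : R, 0 < d /\
    forall y, enorm (y - z) < d ->
      `| f y - f z - dotv gf (y - z) | <= e * enorm (y - z).

(* Frechet differentiability of a vector map at z, with transposed Jacobian Dg *)
Definition has_tjac {n l : nat} (g : 'cV[R]_n -> 'cV[R]_l) (Dg : 'M[R]_(n, l))
    (z : 'cV[R]_n) : Prop :=
  forall e : R, 0 < e -> exists d : R, 0 < d /\
    forall y, enorm (y - z) < d ->
      enorm (g y - g z - Dg^T *m (y - z)) <= e * enorm (y - z).

Definition ext {n : nat} (H : set 'cV[R]_n) (h : 'cV[R]_n -> R) (z : 'cV[R]_n) : \bar R :=
  if `[< H z >] then (h z)%:E else +oo%E.

Definition esubdiff {n : nat} (phi : 'cV[R]_n -> \bar R) (eps : R) (z u : 'cV[R]_n) : Prop :=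
  forall z', (phi z + (dotv u (z' - z) - eps)%:E <= phi z')%E.

Definition Bg0 {n l : nat} (H : set 'cV[R]_n) (g : 'cV[R]_n -> 'cV[R]_l) : R :=
  sup [set enorm (g z) | z in H].
Definition Bg1 {n l : nat} (H : set 'cV[R]_n) (Dg : 'cV[R]_n -> 'M[R]_(n, l)) : R :=
  sup [set opnorm (Dg z) | z in H].

Definition Lambda {n l : nat} (H : set 'cV[R]_n) (g : 'cV[R]_n -> 'cV[R]_l)
  (Dg : 'cV[R]_n -> 'M[R]_(n, l)) (Lf Lg c : R) (p : 'cV[R]_l) : R :=
  Lf + Lg * enorm p + c * (Bg0 H g * Lg + (Bg1 H Dg) ^+ 2).

Definition augL {n l : nat} (f : 'cV[R]_n -> R) (H : set 'cV[R]_n) (h : 'cV[R]_n -> R)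
  (g : 'cV[R]_n -> 'cV[R]_l) (K : set 'cV[R]_l) (c : R) (p : 'cV[R]_l) (z : 'cV[R]_n)
  : \bar R :=
  ((f z + (edist (p + c *: g z) (negset K) ^+ 2 - enorm p ^+ 2) / (2 * c))%:E
    + ext H h z)%E.

Definition gradLt {n l : nat} (gradf : 'cV[R]_n -> 'cV[R]_n) (g : 'cV[R]_n -> 'cV[R]_l)
  (Dg : 'cV[R]_n -> 'M[R]_(n, l)) (K : set 'cV[R]_l) (c : R) (p : 'cV[R]_l)
  (z : 'cV[R]_n) : 'cV[R]_n :=
  gradf z + Dg z *m eproj (dual_cone K) (p + c *: g z).

End Defs.

From Pilot Require Import Defs.
From HB Require Import structures.
From mathcomp Require Import all_boot all_order all_algebra.
From mathcomp Require Import all_classical all_reals all_analysis.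
From mathcomp Require Import ring lra.
Set Implicit Arguments. Unset Strict Implicit. Unset Printing Implicit Defensive.
Import Order.TTheory GRing.Theory Num.Theory numFieldNormedType.Exports.
Local Open Scope classical_set_scope.
Local Open Scope ring_scope.

(* The first-order condition of the prox-linear subproblem says that
   [u := w - grad Ltilde(z)] is a subgradient of [h] at [\hat z].  The
   inexactness criterion, evaluated at [\hat z] and combined with the descent
   inequality of the smooth part [Ltilde] (constant [Lambda]), yields
   [Lpsi |\hat z - z|^2 <= 2 eps] and bounds the linearization error of [h]
   between [\hat z] and [z] by [delta]; hence [u] is a [delta]-subgradient of
   [h] at [z], which is part (a).  For part (b), [\hat w - grad Ltilde(\hat z)]
   is the same [u], [grad Ltilde] is [Lambda]-Lipschitz on the domain of [h],
   and the complementarity relations are the Moreau decomposition of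
   [p + c g(\hat z)] along the dual cone. *)

Section Euclid.
Variables (R : realType) (m : nat).
Implicit Types u v w : 'cV[R]_m.

Lemma dotvC u v : dotv u v = dotv v u.
Proof. by apply: eq_bigr => i _; rewrite mulrC. Qed.

Lemma dotvDl u w v : dotv (u + w) v = dotv u v + dotv w v.
Proof. by rewrite /dotv -big_split; apply: eq_bigr => i _; rewrite mxE mulrDl. Qed.

Lemma dotvZl a u v : dotv (a *: u) v = a * dotv u v.
Proof. by rewrite /dotv mulr_sumr; apply: eq_bigr => i _; rewrite mxE mulrA. Qed.

Lemma dotvNl u v : dotv (- u) v = - dotv u v.
Proof. by rewrite -scaleN1r dotvZl mulN1r. Qed.

Lemma dotvBl u w v : dotv (u - w) v = dotv u v - dotv w v.
Proof. by rewrite dotvDl dotvNl. Qed.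

Lemma dotvDr u v w : dotv u (v + w) = dotv u v + dotv u w.
Proof. by rewrite dotvC dotvDl !(dotvC u). Qed.

Lemma dotvZr a u v : dotv u (a *: v) = a * dotv u v.
Proof. by rewrite dotvC dotvZl dotvC. Qed.

Lemma dotvNr u v : dotv u (- v) = - dotv u v.
Proof. by rewrite dotvC dotvNl dotvC. Qed.

Lemma dotvBr u v w : dotv u (v - w) = dotv u v - dotv u w.
Proof. by rewrite dotvDr dotvNr. Qed.

Lemma dotv0r v : dotv v 0 = 0.
Proof. by rewrite -(scale0r 0) dotvZr mul0r. Qed.

Lemma dotvv_ge0 u : 0 <= dotv u u.
Proof. by apply: sumr_ge0 => i _; rewrite -expr2 sqr_ge0. Qed.

Lemma dotvv_eq0 u : dotv u u = 0 -> u = 0.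
Proof.
move=> /eqP; rewrite /dotv psumr_eq0 => [/allP u0|i _]; last by rewrite -expr2 sqr_ge0.
apply/matrixP => i j; rewrite mxE (ord1 j).
by have := u0 i (mem_index_enum _); rewrite -expr2 sqrf_eq0 => /eqP.
Qed.

Lemma dotv_mul k (M : 'M[R]_(m, k)) (x : 'cV[R]_k) v :
  dotv (M *m x) v = dotv x (M^T *m v).
Proof.
rewrite /dotv; under eq_bigr => i _ do rewrite mxE big_distrl /=.
rewrite exchange_big /=; apply: eq_bigr => j _.
by rewrite mxE big_distrr /=; apply: eq_bigr => i _; rewrite mxE; ring.
Qed.

Lemma enorm_ge0 u : 0 <= enorm u.
Proof. exact: sqrtr_ge0. Qed.

Lemma enorm_sq u : enorm u ^+ 2 = dotv u u.
Proof. by rewrite sqr_sqrtr // dotvv_ge0. Qed.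

Lemma enorm0 : enorm (0 : 'cV[R]_m) = 0.
Proof. by rewrite /enorm dotv0r sqrtr0. Qed.

Lemma enorm_eq0 u : enorm u = 0 -> u = 0.
Proof. by move=> u0; apply: dotvv_eq0; rewrite -enorm_sq u0 expr0n. Qed.

Lemma enormZ a u : enorm (a *: u) = `|a| * enorm u.
Proof. by rewrite /enorm dotvZl dotvZr mulrA -expr2 sqrtrM ?sqr_ge0 // sqrtr_sqr. Qed.

Lemma enormN u : enorm (- u) = enorm u.
Proof. by rewrite -scaleN1r enormZ normrN1 mul1r. Qed.

Lemma enormB u v : enorm (u - v) = enorm (v - u).
Proof. by rewrite -enormN opprB. Qed.

Lemma enormD2 u v : enorm (u + v) ^+ 2 = enorm u ^+ 2 + 2 * dotv u v + enorm v ^+ 2.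
Proof. by rewrite !enorm_sq !dotvDl !dotvDr (dotvC v u); ring. Qed.

Lemma le_of_sq_le (a b : R) : 0 <= b -> a ^+ 2 <= b ^+ 2 -> a <= b.
Proof.
move=> b0 ab; apply: le_trans (ler_norm a) _.
by rewrite -sqrtr_sqr -(ger0_norm b0) -sqrtr_sqr ler_sqrt // sqr_ge0.
Qed.

Lemma dotv_le u v : dotv u v <= enorm u * enorm v.
Proof.
have [->|v0] := eqVneq v 0; first by rewrite dotv0r enorm0 mulr0.
have Bp : 0 < dotv v v.
  by rewrite lt_neqAle dotvv_ge0 andbT eq_sym; apply: contra_neq v0 => /dotvv_eq0.
set A := dotv u u; set B := dotv v v; set C := dotv u v.
(* the quadratic form |B u - C v|^2 = B (A B - C^2) is nonnegative *)
have key : 0 <= B * (A * B - C ^+ 2).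
  have := dotvv_ge0 (B *: u - C *: v).
  by rewrite !dotvBl !dotvBr !dotvZl !dotvZr (dotvC v u) -/A -/B -/C; nra.
apply: le_of_sq_le; first by rewrite mulr_ge0 // enorm_ge0.
by rewrite exprMn !enorm_sq; move: key; rewrite pmulr_rge0 // subr_ge0.
Qed.

Lemma dotv_abs_le u v : `|dotv u v| <= enorm u * enorm v.
Proof.
rewrite ler_norml dotv_le andbT lerNl -dotvNl.
by apply: le_trans (dotv_le _ _) _; rewrite enormN.
Qed.

Lemma enormD u v : enorm (u + v) <= enorm u + enorm v.
Proof.
apply: le_of_sq_le; first by rewrite addr_ge0 // enorm_ge0.
by rewrite enormD2 sqrrD; have := dotv_le u v; lra.
Qed.

Lemma enormDB u v w : enorm (u - w) <= enorm (u - v) + enorm (v - w).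
Proof. by rewrite (_ : u - w = (u - v) + (v - w)) ?enormD // addrA subrK. Qed.

Lemma enorm_le_sum u : enorm u <= \sum_i `|u i 0|.
Proof.
apply: le_of_sq_le; first exact: sumr_ge0.
rewrite enorm_sq /dotv expr2 big_distrl /=; apply: ler_sum => i _.
apply: le_trans (ler_norm _) _; rewrite normrM ler_wpM2l //.
by rewrite (bigD1 i) //= lerDl sumr_ge0.
Qed.

Lemma coord_le u i : `|u i 0| <= enorm u.
Proof.
apply: le_of_sq_le; first exact: enorm_ge0.
rewrite enorm_sq real_normK ?num_real // /dotv (bigD1 i) //= -expr2 lerDl.
by apply: sumr_ge0 => j _; rewrite -expr2 sqr_ge0.
Qed.

End Euclid.

Section OperatorNorm.
Variables (R : realType) (m k : nat).
Implicit Types M : 'M[R]_(m, k).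

Lemma opnorm_has_sup M :
  has_sup [set enorm (M *m x) | x in [set x : 'cV[R]_k | enorm x <= 1]].
Proof.
split; first by exists (enorm (M *m 0)), 0 => //=; rewrite enorm0 ler01.
exists (\sum_i \sum_j `|M i j|) => _ [x /= x1 <-].
apply: le_trans (enorm_le_sum _) _; apply: ler_sum => i _.
rewrite mxE; apply: le_trans (ler_norm_sum _ _ _) _; apply: ler_sum => j _.
by rewrite normrM ler_piMr //; apply: le_trans (coord_le _ _) x1.
Qed.

Lemma opnorm_ge0 M : 0 <= opnorm M.
Proof.
apply: le_trans (sup_upper_bound (opnorm_has_sup M) _); first exact: (enorm_ge0 (M *m 0)).
by exists 0 => //=; rewrite enorm0 ler01.
Qed.

Lemma opnormP M x : enorm (M *m x) <= opnorm M * enorm x.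
Proof.
have [->|x0] := eqVneq x 0; first by rewrite mulmx0 !enorm0 mulr0.
have xp : 0 < enorm x.
  by rewrite lt_neqAle enorm_ge0 andbT eq_sym; apply: contra_neq x0 => /enorm_eq0.
have x1 : enorm ((enorm x)^-1 *: x) <= 1.
  by rewrite enormZ ger0_norm ?invr_ge0 ?enorm_ge0 // mulVf ?gt_eqF.
have := sup_upper_bound (opnorm_has_sup M) (imageP (fun x => enorm (M *m x)) x1).
rewrite -scalemxAr enormZ ger0_norm ?invr_ge0 ?enorm_ge0 // -/(opnorm M).
by rewrite ler_pdivrMl // mulrC.
Qed.

Lemma opnormT M d : enorm (M^T *m d) <= opnorm M * enorm d.
Proof.
set y := M^T *m d.
have [y0|yn0] := eqVneq (enorm y) 0; first by rewrite y0 mulr_ge0 ?opnorm_ge0 ?enorm_ge0.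
have yp : 0 < enorm y by rewrite lt_neqAle eq_sym yn0 enorm_ge0.
have : enorm y * enorm y <= enorm y * (opnorm M * enorm d).
  rewrite -expr2 enorm_sq {1}/y dotv_mul trmxK dotvC (mulrCA (enorm y)) mulrA.
  by apply: le_trans (dotv_le _ _) _; rewrite ler_wpM2r ?enorm_ge0 ?opnormP.
by rewrite ler_pM2l.
Qed.

Lemma opnorm_leP M C : 0 <= C -> (forall x, enorm (M *m x) <= C * enorm x) ->
  opnorm M <= C.
Proof.
move=> C0 MC; apply: ge_sup; first by case: (opnorm_has_sup M).
by move=> _ [x /= x1 <-]; apply: le_trans (MC x) _; rewrite ler_piMr.
Qed.

End OperatorNorm.

Section Calculus01.
Variable R : realType.

Definition deriv01 (phi D : R -> R) : Prop := forall t, 0 <= t <= 1 -> forall e, 0 < e ->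
  exists d, 0 < d /\ forall s, 0 <= s <= 1 -> `|s - t| < d ->
    `|phi s - phi t - D t * (s - t)| <= e * `|s - t|.

(* A function with nonpositive derivative on [0,1] does not increase: the
   supremum [T] of the points where [phi <= phi 0 + e id] is reached and
   cannot be smaller than 1. *)
Lemma deriv01_le0 (phi D : R -> R) : deriv01 phi D ->
  (forall t, 0 <= t <= 1 -> D t <= 0) -> phi 1 <= phi 0.
Proof.
move=> dphi D_le0; apply/ler_addgt0Pr => e e0.
pose S := [set t : R | 0 <= t <= 1 /\ phi t <= phi 0 + e * t].
have S0 : S 0 by split; rewrite ?lexx ?ler01 // mulr0 addr0.
have supS : has_sup S by split; [exists 0 | exists 1 => t [/andP[_ ->]]].
pose T := sup S.
have T01 : 0 <= T <= 1.
  by rewrite sup_upper_bound //= ge_sup //; [exists 0 | move=> t [/andP[]]].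
have [d [d0 near_T]] := dphi T T01 e e0.
have DT := D_le0 T T01.
have ST : S T.
  have [s [s01 phis] Ts] := sup_adherent d0 supS.
  have sT : s <= T by apply: sup_upper_bound.
  have sTd : `|s - T| < d by rewrite distrC ger0_norm ?subr_ge0 // ltrBlDr -ltrBlDl.
  have := near_T s s01 sTd; rewrite ler_norml => /andP[phiT _].
  rewrite ler0_norm ?subr_le0 // in phiT; split => //.
  have : D T * (T - s) <= 0 by rewrite mulr_le0_ge0 // subr_ge0.
  nra.
suff T1 : T = 1 by case: ST => _; rewrite T1 mulr1.
apply/eqP; rewrite eq_le (andP T01).2 /= leNgt; apply/negP => T_lt1.
pose s := Num.min (T + d / 2) 1.
have Ts : T < s by rewrite lt_min T_lt1 ltrDl divr_gt0.
have sd : s <= T + d / 2 by rewrite ge_min lexx.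
have s01 : 0 <= s <= 1.
  by rewrite ge_min lexx orbT andbT; case/andP: T01 => T0 _; lra.
have sTd : `|s - T| < d by rewrite ger0_norm ?subr_ge0 ?(ltW Ts) //; lra.
have := near_T s s01 sTd; rewrite ler_norml => /andP[_ phis].
rewrite ger0_norm ?subr_ge0 ?(ltW Ts) // in phis.
have Ss : S s.
  split => //; case: ST => _ phiT.
  have : D T * (s - T) <= 0 by rewrite mulr_le0_ge0 // subr_ge0 ltW.
  nra.
by have := sup_upper_bound supS Ss; rewrite -/T leNgt Ts.
Qed.

Lemma increment_le (psi D : R -> R) (A B : R) : deriv01 psi D ->
  (forall t, 0 <= t <= 1 -> D t <= A + B * t) -> psi 1 - psi 0 <= A + B / 2.
Proof.
move=> dpsi D_le.
pose phi t := psi t - A * t - B / 2 * t ^+ 2.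
suff : phi 1 <= phi 0 by rewrite /phi; lra.
apply: (@deriv01_le0 phi (fun t => D t - A - B * t)); last by move=> t /D_le; lra.
move=> t t01 e e0.
have [d [d0 near_t]] := dpsi t t01 (e / 2) (divr_gt0 e0 (ltr0Sn _ 1)).
have B1 : 0 < `|B| + 1 by rewrite ltr_pwDr.
exists (Num.min d (e / (`|B| + 1))); split; first by rewrite lt_min d0 divr_gt0.
move=> s s01; rewrite lt_min => /andP [sd sB].
have -> : phi s - phi t - (D t - A - B * t) * (s - t) =
    (psi s - psi t - D t * (s - t)) - B / 2 * (s - t) ^+ 2 by rewrite /phi; field.
apply: le_trans (ler_normB _ _) _.
have quad : `|B / 2 * (s - t) ^+ 2| <= e / 2 * `|s - t|.
  have Bst : `|B| * `|s - t| <= e.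
    by move: sB; rewrite ltr_pdivlMr // => sB; have := normr_ge0 (s - t); nra.
  rewrite normrM normrX normrM (@ger0_norm _ 2^-1) ?invr_ge0 ?ler0n // expr2.
  by have := normr_ge0 (s - t); nra.
by have := near_t s s01 sd; lra.
Qed.

End Calculus01.

Section Segments.
Variables (R : realType) (n l : nat).
Implicit Types (z d : 'cV[R]_n) (s t : R).

Lemma segB z d s t : (z + s *: d) - (z + t *: d) = (s - t) *: d.
Proof. by rewrite opprD addrACA subrr add0r scalerBl. Qed.

Lemma seg_conv z z' t : z + t *: (z' - z) = t *: z' + (1 - t) *: z.
Proof. by rewrite scalerBr scalerBl scale1r addrCA. Qed.

Lemma seg1 z z' : z + 1 *: (z' - z) = z'.
Proof. by rewrite scale1r addrC subrK. Qed.

Lemma seg0 z z' : z + 0 *: (z' - z) = z.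
Proof. by rewrite scale0r addr0. Qed.

Lemma deriv01_scaled (phi D : R -> R) (N : R) : 0 <= N ->
  (forall t, 0 <= t <= 1 -> forall e, 0 < e -> exists del, 0 < del /\
     forall s, `|s - t| * N < del ->
       `|phi s - phi t - D t * (s - t)| <= e * (`|s - t| * N)) ->
  deriv01 phi D.
Proof.
move=> N0 est t t01 e e0; have N1 : 0 < N + 1 by rewrite ltr_pwDr.
have [del [del0 near_t]] := est t t01 (e / (N + 1)) (divr_gt0 e0 N1).
exists (del / (N + 1)); split; first exact: divr_gt0.
move=> s _; rewrite ltr_pdivlMr // => st_small.
have st0 := normr_ge0 (s - t).
have : `|s - t| * N < del by apply: le_lt_trans st_small; rewrite ler_wpM2l //; lra.
move=> /near_t /le_trans; apply.
by rewrite mulrAC ler_pdivrMr //; nra.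
Qed.

Lemma deriv01_grad (f : 'cV[R]_n -> R) (gradf : 'cV[R]_n -> 'cV[R]_n) z d :
  (forall t, 0 <= t <= 1 -> has_grad f (gradf (z + t *: d)) (z + t *: d)) ->
  deriv01 (fun t => f (z + t *: d)) (fun t => dotv (gradf (z + t *: d)) d).
Proof.
move=> fdiff; apply: (deriv01_scaled (enorm_ge0 d)) => t t01 e e0.
have [del [del0 near_t]] := fdiff t t01 e e0.
exists del; split => // s st_small.
by have := near_t (z + s *: d); rewrite segB dotvZr enormZ (mulrC (s - t)); apply.
Qed.

Lemma deriv01_tjac (g : 'cV[R]_n -> 'cV[R]_l) (Dg : 'cV[R]_n -> 'M[R]_(n, l))
    z d (ev : 'cV[R]_l) : (forall z, has_tjac g (Dg z) z) ->
  deriv01 (fun t => dotv ev (g (z + t *: d)))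
          (fun t => dotv ev ((Dg (z + t *: d))^T *m d)).
Proof.
move=> gdiff; apply: (deriv01_scaled (enorm_ge0 d)) => t t01 e e0.
set E := enorm ev; have E1 : 0 < E + 1 by rewrite ltr_pwDr ?enorm_ge0.
have [del [del0 near_t]] := gdiff (z + t *: d) (e / (E + 1)) (divr_gt0 e0 E1).
exists del; split => // s st_small.
have := near_t (z + s *: d); rewrite segB enormZ -scalemxAr => /(_ st_small) gst.
rewrite (mulrC (dotv ev _)) -dotvZr -!dotvBr; apply: le_trans (dotv_abs_le _ _) _.
apply: le_trans (ler_wpM2l (enorm_ge0 _) gst) _.
rewrite -/E mulrA ler_wpM2r ?mulr_ge0 ?enorm_ge0 //.
by rewrite mulrCA ler_piMr ?(ltW e0) // ler_pdivrMr // mul1r; lra.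
Qed.

Lemma descent_lemma (f : 'cV[R]_n -> R) (gradf : 'cV[R]_n -> 'cV[R]_n)
    (H : set 'cV[R]_n) (Lf : R) :
  (forall z z' t, H z -> H z' -> 0 <= t <= 1 -> H (t *: z' + (1 - t) *: z)) ->
  (forall z, H z -> has_grad f (gradf z) z) ->
  (forall z z', H z -> H z' -> enorm (gradf z' - gradf z) <= Lf * enorm (z' - z)) ->
  forall z z', H z -> H z' ->
  f z' - f z - dotv (gradf z) (z' - z) <= Lf / 2 * enorm (z' - z) ^+ 2.
Proof.
move=> Hconv fdiff flip z z' Hz Hz'; set d := z' - z.
have Hseg t : 0 <= t <= 1 -> H (z + t *: d) by rewrite seg_conv; exact: Hconv.
have := increment_le (A := dotv (gradf z) d) (B := Lf * enorm d ^+ 2)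
  (deriv01_grad (fun t t01 => fdiff _ (Hseg t t01))).
rewrite seg1 seg0 => incr.
suff : f z' - f z <= dotv (gradf z) d + Lf * enorm d ^+ 2 / 2 by lra.
apply: incr => t t01.
rewrite -[dotv (gradf _) d](subrK (dotv (gradf z) d)) -dotvBl addrC lerD2l.
apply: le_trans (dotv_le _ _) _.
have := flip _ _ Hz (Hseg t t01); rewrite (addrAC z) subrr add0r enormZ.
case/andP: t01 => t0 _; rewrite ger0_norm // => Lgrad.
have := ler_wpM2r (enorm_ge0 d) Lgrad; rewrite expr2; lra.
Qed.

Lemma tjac_remainder (g : 'cV[R]_n -> 'cV[R]_l) (Dg : 'cV[R]_n -> 'M[R]_(n, l)) (Lg : R) :
  (forall z, has_tjac g (Dg z) z) ->
  (forall z z', opnorm (Dg z' - Dg z) <= Lg * enorm (z' - z)) ->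
  forall ev z z', dotv ev (g z' - g z - (Dg z)^T *m (z' - z))
                  <= Lg / 2 * enorm ev * enorm (z' - z) ^+ 2.
Proof.
move=> gdiff glip ev z z'; set d := z' - z.
have := increment_le (A := dotv ev ((Dg z)^T *m d)) (B := Lg * enorm ev * enorm d ^+ 2)
  (deriv01_tjac z d ev gdiff).
rewrite seg1 seg0 !dotvBr => incr.
suff : dotv ev (g z') - dotv ev (g z) <=
    dotv ev ((Dg z)^T *m d) + Lg * enorm ev * enorm d ^+ 2 / 2 by lra.
apply: incr => t /andP[t0 _].
rewrite -[dotv ev (_ *m d)](subrK (dotv ev ((Dg z)^T *m d))) -dotvBr.
rewrite -mulmxBl -linearB addrC lerD2l /=.
apply: le_trans (dotv_le _ _) _; apply: le_trans (ler_wpM2l (enorm_ge0 _) (opnormT _ _)) _.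
have := glip z (z + t *: d); rewrite (addrAC z) subrr add0r enormZ ger0_norm // => DgL.
have := ler_wpM2l (enorm_ge0 ev) (ler_wpM2r (enorm_ge0 d) DgL).
by rewrite expr2; nra.
Qed.

Lemma tjac_lipschitz (g : 'cV[R]_n -> 'cV[R]_l) (Dg : 'cV[R]_n -> 'M[R]_(n, l))
    (C : R) z z' : (forall z, has_tjac g (Dg z) z) ->
  (forall t, 0 <= t <= 1 -> opnorm (Dg (z + t *: (z' - z))) <= C) ->
  enorm (g z' - g z) <= C * enorm (z' - z).
Proof.
move=> gdiff DgC; set d := z' - z in DgC *; set ev := g z' - g z.
have := increment_le (A := C * enorm ev * enorm d) (B := 0) (deriv01_tjac z d ev gdiff).
rewrite seg1 seg0 -dotvBr -/ev -enorm_sq mul0r addr0 => incr.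
have {}incr : enorm ev * enorm ev <= enorm ev * (C * enorm d).
  rewrite -expr2 mulrCA mulrA; apply: incr => t t01; rewrite mul0r addr0.
  apply: le_trans (dotv_le _ _) _; apply: le_trans (ler_wpM2l (enorm_ge0 _) (opnormT _ _)) _.
  by have := DgC t t01; have := mulr_ge0 (enorm_ge0 ev) (enorm_ge0 d); nra.
have [ev0|evn0] := eqVneq (enorm ev) 0.
  by rewrite ev0 mulr_ge0 ?enorm_ge0 // (le_trans (opnorm_ge0 _) (DgC 0 _)) ?lexx ?ler01.
by move: incr; rewrite ler_pM2l // lt_neqAle eq_sym evn0 enorm_ge0.
Qed.

End Segments.

(* Existence of a nearest point of a closed set to a given point. Compactness
   is available for row vectors, so the argument runs through transposition. *)
Section NearestPoint.
Variables (R : realType) (l : nat).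

Lemma trmx_continuous : continuous (@trmx R 1 l).
Proof.
move=> x s /= /(nbhs_ballP (x^T)) [e e0 es].
apply/nbhs_ballP; exists e => //= N [_ MN]; apply: es; split => // i j.
by rewrite !mxE; exact: MN.
Qed.

Lemma enorm_rev (a b : 'cV[R]_l) : `|enorm a - enorm b| <= enorm (a - b).
Proof.
rewrite ler_norml; apply/andP; split.
  by have := enormD (b - a) a; rewrite subrK enormB; lra.
by have := enormD (a - b) b; rewrite subrK; lra.
Qed.

Lemma dist_continuous (y : 'cV[R]_l) : continuous (fun r : 'rV[R]_l => enorm (y + r^T)).
Proof.
move=> x s /= /nbhs_ballP [e e0 es].
have l1 : 0 < l%:R + 1 :> R by rewrite ltr_pwDr // ler0n.
apply/nbhs_ballP; exists (e / (l%:R + 1)); first exact: divr_gt0.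
move=> N [_ MN]; apply: es => /=.
apply: le_lt_trans (enorm_rev _ _) _; apply: le_lt_trans (enorm_le_sum _) _.
apply: (@le_lt_trans _ _ (\sum_(i < l) (e / (l%:R + 1)))).
  apply: ler_sum => i _; rewrite !mxE opprD addrACA subrr add0r.
  exact: ltW (MN 0 i).
rewrite sumr_const card_ord -[e / (l%:R + 1) *+ l]mulr_natr.
by rewrite mulrAC ltr_pdivrMr // ltr_pM2l //; lra.
Qed.

Lemma mx_norm_le_enorm (r : 'rV[R]_l) : `|r| <= enorm (r^T).
Proof.
rewrite [leLHS]/Num.Def.normr /= mx_normrE; apply: bigmax_le; first exact: enorm_ge0.
by move=> [i j] _ /=; rewrite (ord1 i); have := coord_le (r^T) j; rewrite mxE.
Qed.

(* [-y] has a nearest point [-k1] in [-K], for [K] closed and containing 0: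
   minimize the continuous distance over the compact set of points of [K]
   that are at least as close as [0] *)
Lemma nearest_point (K : set 'cV[R]_l) (y : 'cV[R]_l) : closed K -> K 0 ->
  exists2 k1, K k1 & forall k, K k -> enorm (y + k1) <= enorm (y + k).
Proof.
move=> Kcl K0; pose rho := enorm y *+ 2.
pose A := [set r : 'rV[R]_l | K r^T /\ enorm (0 + r^T) <= rho].
have A0 : A 0 by rewrite /A /= trmx0 addr0 enorm0 mulrn_wge0 ?enorm_ge0.
have Acl : closed A.
  apply: closedI; first exact: (continuous_closedP _).1 trmx_continuous K Kcl.
  exact: (continuous_closedP _).1 (@dist_continuous 0) _ (@closed_le R rho).
have Abd : bounded_set A.
  exists rho; split; first by rewrite num_real.
  move=> M rhoM r [_ rrho]; apply: le_trans (ltW rhoM).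
  by apply: le_trans (mx_norm_le_enorm _) _; rewrite add0r in rrho.
have [r Ar rmin] := compact_EVT_min (ex_intro _ 0 A0) (bounded_closed_compact Abd Acl)
  (continuous_subspaceT (@dist_continuous y)).
rewrite in_setE in Ar; exists r^T => [|k Kk]; first by case: Ar.
have [yk_small|yk_large] := leP (enorm (y + k)) (enorm y).
  have Ak : A k^T.
    rewrite /A /= trmxK add0r; split => //.
    by have := enormD (y + k) (- y); rewrite addrC addKr enormN /rho mulr2n; lra.
  by have := rmin k^T (mem_set Ak); rewrite trmxK.
have := rmin 0 (mem_set A0); rewrite trmx0 addr0 => ry.
exact: le_trans ry (ltW yk_large).
Qed.

End NearestPoint.

Lemma ge0_of_perturbed (R : realType) (a b : R) :
  (forall s, 0 < s -> s <= 1 -> 0 <= a + s * b) -> 0 <= a.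
Proof.
move=> abP; rewrite leNgt; apply/negP => a0.
have ab0 : 0 < - a + `|b| by rewrite ltr_wpDr // oppr_gt0.
pose s := - a / (- a + `|b|).
have s0 : 0 < s by apply: divr_gt0; rewrite ?oppr_gt0.
have s1 : s <= 1 by rewrite ler_pdivrMr // mul1r lerDl.
have sb : s * `|b| < - a by rewrite /s mulrAC ltr_pdivrMr // ltr_pM2l ?oppr_gt0 //; lra.
by have := abP s s0 s1; have := ler_norm b; have := ltW s0; nra.
Qed.

Lemma ge0_of_perturbed2 (R : realType) (a b : R) :
  (forall s, 0 < s -> s <= 1 -> 0 <= s * a + s ^+ 2 * b) -> 0 <= a.
Proof.
move=> abP; apply: (@ge0_of_perturbed _ _ b) => s s0 s1.
by have := abP s s0 s1; rewrite expr2 -mulrA -mulrDr pmulr_rge0.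
Qed.

Section ConeProjection.
Variables (R : realType) (l : nat) (K : set 'cV[R]_l).
Hypothesis HK : closed_convex_cone K.
Implicit Types y k : 'cV[R]_l.

Lemma cone0 : K 0.
Proof. by case: HK => [[x Kx] _ Kscale _]; have := Kscale x 0 Kx (lexx _); rewrite scale0r. Qed.

Lemma coneZ k t : K k -> 0 <= t -> K (t *: k).
Proof. by case: HK => _ _ Kscale _; exact: Kscale. Qed.

Lemma coneD k k' : K k -> K k' -> K (k + k').
Proof.
case: HK => _ _ _ Kconv Kk Kk'.
have half : 0 <= (2^-1 : R) <= 1 by rewrite invr_ge0 ler0n invf_le1 ?ler1n ?ltr0n.
have := coneZ (Kconv k k' _ Kk Kk' half) (ler0n _ 2).
by rewrite (_ : 1 - 2^-1 = 2^-1 :> R) ?scalerDr ?scalerA ?mulfV ?scale1r //; field.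
Qed.

Definition pr (y : 'cV[R]_l) : 'cV[R]_l := eproj (dual_cone K) y.

(* the nearest point [-k1] of [-K] to [y] yields the decomposition: first-order
   optimality in the directions [k] and [-k1] *)
Lemma moreau_witness y : exists2 k1, K k1 &
  dual_cone K (y + k1) /\ dotv (y + k1) k1 = 0.
Proof.
case: (HK) => _ Kcl _ _; have [k1 Kk1 k1min] := nearest_point y Kcl cone0.
set p := y + k1.
have quad k s : K (k1 + s *: k) -> 0 <= s * (2 * dotv p k) + s ^+ 2 * enorm k ^+ 2.
  move=> Kks; have := k1min _ Kks; rewrite addrA -/p => pmin.
  have : enorm p ^+ 2 <= enorm (p + s *: k) ^+ 2 by rewrite ler_pXn2r ?nnegrE ?enorm_ge0.
  by rewrite enormD2 dotvZr enormZ exprMn real_normK ?num_real //; lra.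
have pdual : dual_cone K p.
  move=> k Kk; suff : 0 <= 2 * dotv p k by lra.
  apply: ge0_of_perturbed2 => s s0 _.
  exact: quad _ _ (coneD Kk1 (coneZ Kk (ltW s0))).
exists k1 => //; split => //; apply/eqP; rewrite eq_le (pdual _ Kk1) andbT.
suff : 0 <= - (2 * dotv p k1) by lra.
apply: (@ge0_of_perturbed2 _ _ (enorm k1 ^+ 2)) => s s0 s1.
have Kk : K (k1 + (- s) *: k1).
  by rewrite -{1}[k1]scale1r -scalerDl; apply: coneZ => //; lra.
by have := quad _ _ Kk; rewrite sqrrN mulNr mulrN.
Qed.

(* any such decomposition is the projection: [y + k1] is the nearest point
   of [K^*], by the Pythagorean identity below *)
Lemma pr_moreau y k1 : K k1 -> dual_cone K (y + k1) -> dotv (y + k1) k1 = 0 ->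
  pr y = y + k1.
Proof.
move=> Kk1 pdual orth; set p := y + k1 in pdual orth *.
have pyth s : enorm (y - s) ^+ 2 = enorm (p - s) ^+ 2 + 2 * dotv s k1 + enorm k1 ^+ 2.
  rewrite (_ : y - s = (p - s) + - k1); last by rewrite /p addrAC addrK.
  by rewrite enormD2 enormN dotvNr dotvBl orth dotvC; ring.
pose P := [set x | dual_cone K x /\ forall s, dual_cone K s -> enorm (y - x) <= enorm (y - s)].
have Pp : P p.
  split => // s Ks; rewrite -(ler_pXn2r (n := 2)) ?nnegrE ?enorm_ge0 // !pyth subrr enorm0.
  by have := Ks _ Kk1; have := sqr_ge0 (enorm (p - s)); rewrite orth expr0n /=; nra.
have [Px xmin] := xgetPex 0 (ex_intro P p Pp); rewrite /pr /eproj -/P.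
set x := xget _ _ in Px xmin *.
have := xmin p Pp.1; rewrite -(ler_pXn2r (n := 2)) ?nnegrE ?enorm_ge0 //.
rewrite !pyth subrr enorm0 orth expr0n /= => px.
have px0 : enorm (p - x) = 0.
  by apply/eqP; rewrite -sqrf_eq0 eq_le sqr_ge0 andbT; have := Px _ Kk1; lra.
by apply/eqP; rewrite eq_sym -subr_eq0; apply/eqP/enorm_eq0.
Qed.

Lemma pr_spec y :
  [/\ dual_cone K (pr y), negset K (y - pr y) & dotv (y - pr y) (pr y) = 0].
Proof.
have [k1 Kk1 [pdual orth]] := moreau_witness y.
rewrite (pr_moreau Kk1 pdual orth) opprD addrA subrr add0r.
split => //; first by rewrite /negset /= opprK.
by rewrite dotvNl dotvC orth oppr0.
Qed.

Lemma pr_dual y : dual_cone K (pr y). Proof. by case: (pr_spec y). Qed.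
Lemma pr_neg y : negset K (y - pr y). Proof. by case: (pr_spec y). Qed.
Lemma pr_orth y : dotv (y - pr y) (pr y) = 0. Proof. by case: (pr_spec y). Qed.

Lemma pr_norm y : enorm (pr y) <= enorm y.
Proof.
rewrite -(ler_pXn2r (n := 2)) ?nnegrE ?enorm_ge0 // -{2}[y](subrK (pr y)).
by rewrite enormD2 pr_orth; have := sqr_ge0 (enorm (y - pr y)); lra.
Qed.

(* firm nonexpansiveness [|p - p'|^2 <= <p - p', y - y'>] gives the Lipschitz bound *)
Lemma pr_lip y y' : enorm (pr y - pr y') <= enorm (y - y').
Proof.
set p := pr y; set p' := pr y'.
have firm : enorm (p - p') ^+ 2 <= dotv (p - p') (y - y').
  have -> : y - y' = (p - p') + ((y - p) - (y' - p')).
    by apply/matrixP => i j; rewrite !mxE; ring.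
  rewrite dotvDr -enorm_sq lerDl.
  have := pr_dual y (pr_neg y'); have := pr_dual y' (pr_neg y).
  have := pr_orth y; have := pr_orth y'; rewrite -/p -/p'.
  rewrite !dotvNr !dotvBl !dotvBr (dotvC y p) (dotvC y' p') (dotvC p' p); lra.
have [->|pp0] := eqVneq (enorm (p - p')) 0; first exact: enorm_ge0.
have : enorm (p - p') * enorm (p - p') <= enorm (p - p') * enorm (y - y').
  by rewrite -expr2; apply: le_trans firm (dotv_le _ _).
by rewrite ler_pM2l // lt_neqAle eq_sym pp0 enorm_ge0.
Qed.

Lemma edist_le y k : negset K k -> Defs.edist y (negset K) <= enorm (y - k).
Proof.
move=> Kk; apply: ge_inf; last by exists k.
by exists 0 => _ [s _ <-]; exact: enorm_ge0.
Qed.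

Lemma edist_eq y : Defs.edist y (negset K) = enorm (pr y).
Proof.
apply/le_anti/andP; split.
  by have := edist_le y (pr_neg y); rewrite opprB addrC subrK.
apply: lb_le_inf; first by exists (enorm (y - 0)), 0; rewrite // /negset /= oppr0; exact: cone0.
move=> _ [k Kk <-]; rewrite -(ler_pXn2r (n := 2)) ?nnegrE ?enorm_ge0 //.
have -> : y - k = (y - pr y - k) + pr y by rewrite addrAC subrK.
rewrite enormD2 dotvBl pr_orth sub0r.
have := pr_dual y Kk; rewrite dotvNr dotvC => kp.
by have := sqr_ge0 (enorm (y - pr y - k)); lra.
Qed.

Lemma edist2_upper y y' : Defs.edist y' (negset K) ^+ 2 <=
  enorm (pr y) ^+ 2 + 2 * dotv (pr y) (y' - y) + enorm (y' - y) ^+ 2.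
Proof.
have := edist_le y' (pr_neg y).
have -> : y' - (y - pr y) = pr y + (y' - y) by apply/matrixP => i j; rewrite !mxE; ring.
have dist0 : 0 <= Defs.edist y' (negset K) by rewrite edist_eq enorm_ge0.
by rewrite -enormD2 ler_pXn2r ?nnegrE ?enorm_ge0.
Qed.

Lemma projected_multiplier_kkt (c : R) (p y : 'cV[R]_l) : 0 < c ->
  let ph := pr (p + c *: y) in let q := c^-1 *: (p - ph) in
  [/\ dotv (y + q) ph = 0, negset K (y + q) & dual_cone K ph].
Proof.
move=> c0 ph q.
have yq : y + q = c^-1 *: ((p + c *: y) - ph).
  by apply/matrixP => i j; rewrite !mxE; field; rewrite gt_eqF.
rewrite yq; split; last exact: pr_dual.
- by rewrite dotvZl pr_orth mulr0.
- by rewrite /negset /= -scalerN; apply: coneZ; [exact: pr_neg | rewrite invr_ge0 ltW].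
Qed.

End ConeProjection.

Section CompactBounds.
Variables (R : realType) (n l : nat) (H : set 'cV[R]_n).
Variables (g : 'cV[R]_n -> 'cV[R]_l) (Dg : 'cV[R]_n -> 'M[R]_(n, l)) (Lg : R).
Hypotheses (Hne : H !=set0) (Hcpt : compact H).
Hypothesis gdiff : forall z, has_tjac g (Dg z) z.
Hypothesis Lg_ge0 : 0 <= Lg.
Hypothesis Dg_lip : forall z z', opnorm (Dg z' - Dg z) <= Lg * enorm (z' - z).

Lemma compact_enorm_bounded : exists2 rho, 0 <= rho & forall x, H x -> enorm x <= rho.
Proof.
have [M [_ MH]] := compact_bounded Hcpt.
exists ((`|M| + 1) *+ n) => [|x Hx]; first by rewrite mulrn_wge0 // addr_ge0.
have x_le : `|x| <= `|M| + 1 by apply: MH => //; apply: le_lt_trans (ler_norm M) _; lra.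
apply: le_trans (enorm_le_sum _) _.
apply: (@le_trans _ _ (\sum_(i < n) (`|M| + 1))); last by rewrite sumr_const card_ord.
apply: ler_sum => i _; apply: le_trans x_le.
rewrite [leRHS]/Num.Def.normr /= mx_normrE.
exact: (@le_bigmax _ _ _ 0 (fun ij : 'I_n * 'I_1 => `|x ij.1 ij.2|) (i, 0)).
Qed.

Lemma compact_diam : exists2 D, 0 <= D & forall x y, H x -> H y -> enorm (y - x) <= D.
Proof.
have [rho rho0 Hrho] := compact_enorm_bounded.
exists (rho *+ 2) => [|x y Hx Hy]; first exact: mulrn_wge0.
by apply: le_trans (enormD _ _) _; rewrite enormN mulr2n lerD ?Hrho.
Qed.

Lemma opnorm_shift z1 x : opnorm (Dg x) <= opnorm (Dg z1) + Lg * enorm (x - z1).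
Proof.
apply: opnorm_leP => [|v]; first by rewrite addr_ge0 ?opnorm_ge0 ?mulr_ge0 ?enorm_ge0.
rewrite -[Dg x](subrK (Dg z1)) mulmxDl addrC mulrDl.
apply: le_trans (enormD _ _) (lerD (opnormP _ _) _).
by apply: le_trans (opnormP _ _) _; rewrite ler_wpM2r ?enorm_ge0 ?Dg_lip.
Qed.

Lemma Bg1_has_sup : has_sup [set opnorm (Dg z) | z in H].
Proof.
have [D D0 diam] := compact_diam; case: Hne => z1 Hz1.
split; first by exists (opnorm (Dg z1)), z1.
exists (opnorm (Dg z1) + Lg * D) => _ [x Hx <-].
by apply: le_trans (opnorm_shift z1 x) _; rewrite lerD2l ler_wpM2l ?diam.
Qed.

Lemma Bg1_ub z : H z -> opnorm (Dg z) <= Bg1 H Dg.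
Proof. by move=> Hz; apply: sup_upper_bound Bg1_has_sup _ _; exists z. Qed.

Lemma Bg1_ge0 : 0 <= Bg1 H Dg.
Proof. by case: Hne => z Hz; apply: le_trans (opnorm_ge0 _) (Bg1_ub Hz). Qed.

Lemma Bg0_has_sup : has_sup [set enorm (g z) | z in H].
Proof.
have [D D0 diam] := compact_diam; case: Hne => z1 Hz1.
split; first by exists (enorm (g z1)), z1.
pose C := opnorm (Dg z1) + Lg * D.
exists (enorm (g z1) + C * D) => _ [x Hx <-].
have C0 : 0 <= C by rewrite addr_ge0 ?opnorm_ge0 ?mulr_ge0.
have gx : enorm (g x - g z1) <= C * enorm (x - z1).
  apply: tjac_lipschitz gdiff _ => t /andP[t0 t1].
  apply: le_trans (opnorm_shift z1 _) _; rewrite lerD2l ler_wpM2l //.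
  rewrite addrAC subrr add0r enormZ ger0_norm //.
  by apply: le_trans (diam _ _ Hz1 Hx); rewrite ler_piMl ?enorm_ge0.
rewrite -[g x](subrK (g z1)); apply: le_trans (enormD _ _) _; rewrite addrC lerD2l.
by apply: le_trans gx _; rewrite ler_wpM2l ?diam.
Qed.

Lemma Bg0_ub z : H z -> enorm (g z) <= Bg0 H g.
Proof. by move=> Hz; apply: sup_upper_bound Bg0_has_sup _ _; exists z. Qed.

Lemma Bg0_ge0 : 0 <= Bg0 H g.
Proof. by case: Hne => z Hz; apply: le_trans (enorm_ge0 _) (Bg0_ub Hz). Qed.

End CompactBounds.

Section ExtendedValued.
Variables (R : realType) (n : nat) (H : set 'cV[R]_n) (h : 'cV[R]_n -> R).
Implicit Types x u : 'cV[R]_n.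

Lemma ext_in x : H x -> ext H h x = (h x)%:E.
Proof. by move=> Hx; rewrite /ext asboolT. Qed.

Lemma ext_out x : ~ H x -> ext H h x = +oo%E.
Proof. by move=> Hx; rewrite /ext asboolF. Qed.

Lemma esubdiff_extP e x u : H x ->
  esubdiff (ext H h) e x u <-> forall x', H x' -> h x + (dotv u (x' - x) - e) <= h x'.
Proof.
move=> Hx; split => [usub x' Hx'|ule x'].
  by have := usub x'; rewrite !ext_in // -EFinD lee_fin.
have [Hx'|Hx'] := pselect (H x'); last by rewrite (ext_out Hx') leey.
by rewrite !ext_in // -EFinD lee_fin ule.
Qed.

Lemma esubdiff_transport x y u delta : H x -> H y ->
  h y - h x - dotv u (y - x) <= delta ->
  esubdiff (ext H h) 0 x u -> esubdiff (ext H h) delta y u.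
Proof.
move=> Hx Hy lin_err /(esubdiff_extP _ _ Hx) usub; apply/esubdiff_extP => // x' Hx'.
have split_x : x' - x = (x' - y) + (y - x) by rewrite addrA subrK.
by have := usub x' Hx'; rewrite subr0 split_x dotvDr; lra.
Qed.

Lemma argmin_in_dom (q : 'cV[R]_n -> R) (lam : R) x : 0 < lam -> H !=set0 ->
  (forall u, ((q x)%:E + lam%:E * ext H h x <= (q u)%:E + lam%:E * ext H h u)%E) ->
  H x.
Proof.
move=> lam0 [u Hu] xmin; apply: contrapT => Hx; have := xmin u.
by rewrite (ext_out Hx) (ext_in Hu) gt0_muley ?lte_fin // addey // leye_eq.
Qed.

Hypothesis H_convex :
  forall z z' t, H z -> H z' -> 0 <= t <= 1 -> H (t *: z' + (1 - t) *: z).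
Hypothesis h_convex : forall z z' t, H z -> H z' -> 0 <= t <= 1 ->
  h (t *: z' + (1 - t) *: z) <= t * h z' + (1 - t) * h z.

(* Compare [zhat] with [zhat + s (x - zhat)] and let [s] go to 0. *)
Lemma prox_linear_subgrad (a b z zhat : 'cV[R]_n) (lam L : R) : 0 < lam -> H !=set0 ->
  (forall u,
     ((lam * dotv a (zhat - z) - dotv b (zhat - z) + L / 2 * enorm (zhat - z) ^+ 2)%:E
        + lam%:E * ext H h zhat
      <= (lam * dotv a (u - z) - dotv b (u - z) + L / 2 * enorm (u - z) ^+ 2)%:E
        + lam%:E * ext H h u)%E) ->
  esubdiff (ext H h) 0 zhat (lam^-1 *: (b + L *: (z - zhat)) - a).
Proof.
move=> lam0 Hne zmin; have Hzhat := argmin_in_dom lam0 Hne zmin.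
apply/esubdiff_extP => // x Hx; set dx := x - zhat.
have key : 0 <= lam * dotv a dx - dotv b dx + L * dotv (zhat - z) dx + lam * (h x - h zhat).
  apply: (@ge0_of_perturbed2 _ _ (L / 2 * enorm dx ^+ 2)) => s s0 s1.
  have s01 : 0 <= s <= 1 by rewrite s1 ltW.
  have Hxs : H (zhat + s *: dx) by rewrite seg_conv; exact: H_convex.
  have := zmin (zhat + s *: dx); rewrite !ext_in // -!EFinM -!EFinD lee_fin.
  have := h_convex Hzhat Hx s01; rewrite -seg_conv -/dx => hconv.
  have := ler_wpM2l (ltW lam0) hconv.
  have -> : zhat + s *: dx - z = (zhat - z) + s *: dx by rewrite addrAC.
  rewrite !(dotvDr _ (zhat - z)) !dotvZr (enormD2 (zhat - z)) dotvZr enormZ.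
  by rewrite (ger0_norm (ltW s0)) exprMn; lra.
have dz : dotv (z - zhat) dx = - dotv (zhat - z) dx by rewrite -dotvNl opprB.
rewrite subr0 dotvBl dotvZl dotvDl dotvZl dz.
have -> : lam^-1 * (dotv b dx + L * - dotv (zhat - z) dx) - dotv a dx =
    lam^-1 * (dotv b dx - L * dotv (zhat - z) dx - lam * dotv a dx).
  by field; rewrite gt_eqF.
have : dotv b dx - L * dotv (zhat - z) dx - lam * dotv a dx <= lam * (h x - h zhat) by lra.
have ilam : 0 <= lam^-1 by rewrite invr_ge0 ltW.
move=> /(ler_wpM2l ilam); rewrite mulrA mulVf ?gt_eqF // mul1r; lra.
Qed.

End ExtendedValued.

Section AugmentedLagrangian.
Variables (R : realType) (n l : nat).
Variables (f : 'cV[R]_n -> R) (gradf : 'cV[R]_n -> 'cV[R]_n).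
Variables (H : set 'cV[R]_n) (h : 'cV[R]_n -> R).
Variables (g : 'cV[R]_n -> 'cV[R]_l) (Dg : 'cV[R]_n -> 'M[R]_(n, l)).
Variables (K : set 'cV[R]_l) (Lf Lg : R).
Hypothesis HK : closed_convex_cone K.
Hypotheses (Hne : H !=set0) (Hcpt : compact H).
Hypothesis H_convex :
  forall z z' t, H z -> H z' -> 0 <= t <= 1 -> H (t *: z' + (1 - t) *: z).
Hypothesis fdiff : forall z, H z -> has_grad f (gradf z) z.
Hypothesis Lf_ge0 : 0 <= Lf.
Hypothesis gradf_lip :
  forall z z', H z -> H z' -> enorm (gradf z' - gradf z) <= Lf * enorm (z' - z).
Hypothesis gdiff : forall z, has_tjac g (Dg z) z.
Hypothesis Lg_ge0 : 0 <= Lg.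
Hypothesis Dg_lip : forall z z', opnorm (Dg z' - Dg z) <= Lg * enorm (z' - z).

Local Notation B0 := (Bg0 H g).
Local Notation B1 := (Bg1 H Dg).
Local Notation Lam := (Lambda H g Dg Lf Lg).
Local Notation gL := (gradLt gradf g Dg K).

Definition Lsmooth (c : R) (p : 'cV[R]_l) (z : 'cV[R]_n) : R :=
  f z + (Defs.edist (p + c *: g z) (negset K) ^+ 2 - enorm p ^+ 2) / (2 * c).

Lemma Lambda_ge0 c p : 0 <= c -> 0 <= Lam c p.
Proof.
move=> c0; have B0_ge0 := Bg0_ge0 Hne Hcpt gdiff Lg_ge0 Dg_lip.
rewrite /Lambda; apply: addr_ge0; [apply: addr_ge0 | apply: mulr_ge0] => //.
- exact: mulr_ge0 (enorm_ge0 _).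
- exact: addr_ge0 (mulr_ge0 _ _) (sqr_ge0 _).
Qed.

Lemma multiplier_le c p z : 0 <= c -> H z -> enorm (pr K (p + c *: g z)) <= enorm p + c * B0.
Proof.
move=> c0 Hz; apply: le_trans (pr_norm HK _) _; apply: le_trans (enormD _ _) _.
by rewrite lerD2l enormZ ger0_norm // ler_wpM2l // (Bg0_ub Hne Hcpt gdiff Lg_ge0 Dg_lip).
Qed.

Lemma g_lip x y : H x -> H y -> enorm (g y - g x) <= B1 * enorm (y - x).
Proof.
move=> Hx Hy; apply: tjac_lipschitz gdiff _ => t t01.
by apply: (Bg1_ub Hne Hcpt Lg_ge0 Dg_lip); rewrite seg_conv; exact: H_convex.
Qed.

Lemma multiplier_argB c p x y : (p + c *: g y) - (p + c *: g x) = c *: (g y - g x).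
Proof. by rewrite opprD addrACA subrr add0r scalerBr. Qed.

(* the penalty term inherits the quadratic upper bound of [dist^2(., -K)] *)
Lemma penalty_descent c p x y : 0 < c ->
  (Defs.edist (p + c *: g y) (negset K) ^+ 2 - enorm p ^+ 2) / (2 * c)
    - (Defs.edist (p + c *: g x) (negset K) ^+ 2 - enorm p ^+ 2) / (2 * c)
  <= dotv (pr K (p + c *: g x)) (g y - g x) + c / 2 * enorm (g y - g x) ^+ 2.
Proof.
move=> c0; have := edist2_upper HK (p + c *: g x) (p + c *: g y).
rewrite multiplier_argB dotvZr enormZ exprMn (ger0_norm (ltW c0)) -(edist_eq HK) => up.
rewrite -mulrBl opprB addrA subrK ler_pdivrMr ?mulr_gt0 //; lra.
Qed.

Lemma Lsmooth_descent c p x y : 0 < c -> H x -> H y ->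
  Lsmooth c p y - Lsmooth c p x - dotv (gL c p x) (y - x)
    <= Lam c p / 2 * enorm (y - x) ^+ 2.
Proof.
move=> c0 Hx Hy; set pi := pr K (p + c *: g x).
have f_desc := descent_lemma H_convex fdiff gradf_lip Hx Hy.
have pen := penalty_descent p x y c0; rewrite -/pi in pen.
have rem := tjac_remainder gdiff Dg_lip pi x y; rewrite dotvBr in rem.
have gsq : c / 2 * enorm (g y - g x) ^+ 2 <= c / 2 * (Bg1 H Dg ^+ 2 * enorm (y - x) ^+ 2).
  apply: ler_wpM2l; first by rewrite divr_ge0 ?ltW.
  have B1_ge0 := Bg1_ge0 Hne Hcpt Lg_ge0 Dg_lip.
  by rewrite -exprMn ler_pXn2r ?nnegrE ?mulr_ge0 ?enorm_ge0 ?g_lip.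
have pisq : Lg / 2 * enorm pi * enorm (y - x) ^+ 2 <=
    Lg / 2 * (enorm p + c * B0) * enorm (y - x) ^+ 2.
  apply: ler_wpM2r; first exact: sqr_ge0.
  by apply: ler_wpM2l; [rewrite divr_ge0 | apply: multiplier_le; rewrite // ltW].
rewrite /Lsmooth /gradLt -/(pr K _) -/pi dotvDl dotv_mul /Lambda; lra.
Qed.

Lemma multiplier_gap c p x y : 0 <= c -> H x -> H y ->
  enorm (pr K (p + c *: g x) - pr K (p + c *: g y)) <= c * (B1 * enorm (y - x)).
Proof.
move=> c0 Hx Hy; apply: le_trans (pr_lip HK _ _) _.
by rewrite -enormN opprB multiplier_argB enormZ ger0_norm // ler_wpM2l ?g_lip.
Qed.

Lemma gradLt_lip c p x y : 0 <= c -> H x -> H y ->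
  enorm (gL c p y - gL c p x) <= Lam c p * enorm (y - x).
Proof.
move=> c0 Hx Hy; set ph := pr K (p + c *: g y); set pi := pr K (p + c *: g x).
have -> : gL c p y - gL c p x =
    (gradf y - gradf x) + ((Dg y - Dg x) *m ph + Dg x *m (ph - pi)).
  rewrite /gradLt -/(pr K (p + c *: g y)) -/(pr K (p + c *: g x)) -/ph -/pi.
  rewrite mulmxBl mulmxBr; move: (gradf y) (gradf x) (Dg y *m ph) (Dg x *m ph) (Dg x *m pi).
  by move=> a b u v w; apply/matrixP => i j; rewrite !mxE; ring.
have d0 := enorm_ge0 (y - x).
have Dg_term : enorm ((Dg y - Dg x) *m ph) <= Lg * enorm (y - x) * (enorm p + c * B0).
  apply: le_trans (opnormP _ _) _; apply: le_trans (ler_wpM2r (enorm_ge0 _) (Dg_lip x y)) _.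
  by rewrite ler_wpM2l ?mulr_ge0 ?multiplier_le.
have pr_term : enorm (Dg x *m (ph - pi)) <= B1 * (c * (B1 * enorm (y - x))).
  apply: le_trans (opnormP _ _) _.
  apply: le_trans (ler_wpM2r (enorm_ge0 _) (Bg1_ub Hne Hcpt Lg_ge0 Dg_lip Hx)) _.
  rewrite ler_wpM2l ?(Bg1_ge0 Hne Hcpt Lg_ge0 Dg_lip) //.
  by rewrite -enormN opprB; exact: multiplier_gap.
apply: le_trans (enormD _ _) _; have := gradf_lip Hx Hy.
have := enormD ((Dg y - Dg x) *m ph) (Dg x *m (ph - pi)).
by rewrite /Lambda; nra.
Qed.

(* splitting a vector [v] against the gradient [gL c p x], to exhibit
   [v - gL c p x] as the [h]-component of [v] *)
Lemma gradLt_decomp c p x v :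
  v = gradf x + (v - gL c p x) + Dg x *m pr K (p + c *: g x).
Proof. by rewrite /gradLt [gradf x + _]addrC -addrA subrK. Qed.

Lemma gradLt_shift c p x y v :
  v + gL c p y - gL c p x = gradf y + (v - gL c p x) + Dg y *m pr K (p + c *: g y).
Proof.
rewrite /gradLt -/(pr K (p + c *: g y)) -/(pr K (p + c *: g x)).
move: (gradf x) (gradf y) (Dg y *m _) (Dg x *m _) => a b u u'.
by apply/matrixP => i j; rewrite !mxE; ring.
Qed.

Definition proxL (lam c : R) (p : 'cV[R]_l) (z0 u : 'cV[R]_n) : \bar R :=
  (lam%:E * augL f H h g K c p u + (enorm (u - z0) ^+ 2 / 2)%:E)%E.

Lemma proxL_in lam c p z0 u : H u ->
  proxL lam c p z0 u = (lam * (Lsmooth c p u + h u) + enorm (u - z0) ^+ 2 / 2)%:E.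
Proof. by move=> Hu; rewrite /proxL /augL ext_in // -EFinD -EFinM -EFinD. Qed.

Lemma inexact_prox_dom lam c p z0 eps z v : 0 < lam ->
  esubdiff (proxL lam c p z0) eps z v -> H z.
Proof.
move=> lam0 vsub; case: Hne => u Hu; apply: contrapT => Hz.
have := vsub u; rewrite (proxL_in lam c p z0 Hu) /proxL /augL (ext_out h Hz).
by rewrite addey // gt0_muley ?lte_fin // !addye // leye_eq.
Qed.

(* the inexact prox step, compared with the exact prox-linear point [zhat]:
   descent of the smooth part plus strong convexity of the proximal term *)
Lemma inexact_prox_descent lam c p z0 eps z v zhat : 0 < lam -> 0 < c ->
  H z -> H zhat -> esubdiff (proxL lam c p z0) eps z v ->
  dotv (v + z0 - z) (zhat - z) - lam * dotv (gL c p z) (zhat - z)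
    - (lam * Lam c p + 1) / 2 * enorm (zhat - z) ^+ 2 - eps
  <= lam * (h zhat - h z).
Proof.
move=> lam0 c0 Hz Hzhat vsub; set d := zhat - z.
have := vsub zhat; rewrite !proxL_in // -EFinD lee_fin -/d.
have -> : zhat - z0 = (z - z0) + d by apply/matrixP => i j; rewrite !mxE; ring.
have := ler_wpM2l (ltW lam0) (Lsmooth_descent p c0 Hz Hzhat); rewrite -/d.
have -> : v + z0 - z = v - (z - z0) by rewrite opprB addrA.
by rewrite (enormD2 (z - z0) d) (dotvBl v (z - z0)); lra.
Qed.

Lemma inexact_prox_linear_step lam c p z0 eps z v zhat : 0 < lam -> 0 < c ->
  H z -> H zhat -> esubdiff (proxL lam c p z0) eps z v ->
  let Lpsi := lam * Lam c p + 1 in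
  let u := lam^-1 *: ((v + z0 - z) + Lpsi *: (z - zhat)) - gL c p z in
  esubdiff (ext H h) 0 zhat u ->
  Lpsi * enorm (zhat - z) ^+ 2 <= 2 * eps /\ esubdiff (ext H h) (eps / lam) z u.
Proof.
move=> lam0 c0 Hz Hzhat vsub Lpsi u usub.
have desc := inexact_prox_descent lam0 c0 Hz Hzhat vsub.
have := (esubdiff_extP _ _ _ Hzhat).1 usub z Hz; rewrite subr0 => subg.
have lam_u : lam * dotv u (z - zhat) = - dotv (v + z0 - z) (zhat - z)
    + Lpsi * enorm (zhat - z) ^+ 2 + lam * dotv (gL c p z) (zhat - z).
  have zz : z - zhat = - (zhat - z) by rewrite opprB.
  rewrite /u zz (dotvBl (lam^-1 *: _)) dotvZl (dotvDl (v + z0 - z)) dotvZl.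
  rewrite !dotvNr !dotvNl opprK -enorm_sq.
  by field; rewrite gt_eqF.
have lin_err : h z - h zhat - dotv u (z - zhat) <= eps / lam.
  rewrite ler_pdivlMr // mulrC; have := sqr_ge0 (enorm (zhat - z)).
  have : 0 <= Lpsi by rewrite addr_ge0 ?mulr_ge0 ?Lambda_ge0 ?ltW.
  by move: desc subg lam_u; rewrite -/Lpsi; nra.
split; last exact: esubdiff_transport Hzhat Hz lin_err usub.
by move: desc subg lam_u; rewrite -/Lpsi; nra.
Qed.

End AugmentedLagrangian.

Section ResidualBounds.
Variable R : realType.

Lemma step_le_residual (L s eps D Rn Vn : R) : 0 < L -> 0 < s -> 0 <= D -> 0 <= Rn ->
  L * D ^+ 2 <= 2 * eps -> Vn ^+ 2 + 2 * eps <= s ^+ 2 * Rn ^+ 2 ->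
  Num.sqrt L * D <= s * Rn.
Proof.
move=> L0 s0 D0 Rn0 step crit; apply: le_of_sq_le; first exact: mulr_ge0 (ltW s0) Rn0.
by rewrite !exprMn (sqr_sqrtr (ltW L0)); have := sqr_ge0 Vn; lra.
Qed.

Lemma error_le_residual (lam s eps Rn Vn : R) : 0 < lam ->
  Vn ^+ 2 + 2 * eps <= s ^+ 2 * Rn ^+ 2 -> eps / lam <= (2 * lam)^-1 * s ^+ 2 * Rn ^+ 2.
Proof.
move=> lam0 crit; rewrite ler_pdivrMr //.
have -> : (2 * lam)^-1 * s ^+ 2 * Rn ^+ 2 * lam = s ^+ 2 * Rn ^+ 2 / 2.
  by field; rewrite gt_eqF.
by have := sqr_ge0 Vn; lra.
Qed.

Lemma prox_residual_le n (lam L s : R) (r d : 'cV[R]_n) : 0 < lam -> 0 < L ->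
  Num.sqrt L * enorm d <= s * enorm r ->
  enorm (lam^-1 *: (r + L *: d)) <= lam^-1 * (1 + s * Num.sqrt L) * enorm r.
Proof.
move=> lam0 L0 step; have ilam : 0 <= lam^-1 by rewrite invr_ge0 ltW.
rewrite enormZ (ger0_norm ilam) -mulrA; apply: ler_wpM2l => //.
apply: le_trans (enormD _ _) _; rewrite enormZ (ger0_norm (ltW L0)).
rewrite -[L in L * _](sqr_sqrtr (ltW L0)) expr2 -mulrA.
have := ler_wpM2l (sqrtr_ge0 L) step; nra.
Qed.

(* adding a gradient difference bounded by [Lam |d|] with [lam Lam < Lpsi] *)
Lemma perturbed_residual_le n (lam L Lam s D Rn : R) (w e : 'cV[R]_n) :
  0 < lam -> lam * Lam + 1 = L -> 0 <= Lam -> 0 <= D ->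
  enorm w <= lam^-1 * (1 + s * Num.sqrt L) * Rn -> enorm e <= Lam * D ->
  Num.sqrt L * D <= s * Rn ->
  enorm (w + e) <= lam^-1 * (1 + 2 * s * Num.sqrt L) * Rn.
Proof.
move=> lam0 eL Lam0 D0 wle ele step; apply: le_trans (enormD _ _) _.
have L0 : 0 <= L by rewrite -eL addr_ge0 // mulr_ge0 // ltW.
have LamD : Lam * D <= lam^-1 * (Num.sqrt L * (s * Rn)).
  rewrite -(ler_pM2l lam0) mulVKf ?gt_eqF // mulrA.
  apply: le_trans _ (ler_wpM2l (sqrtr_ge0 L) step).
  by rewrite mulrA -expr2 sqr_sqrtr // -eL ler_wpM2r // lerDl.
have : lam^-1 * (1 + 2 * s * Num.sqrt L) * Rn =
  lam^-1 * (1 + s * Num.sqrt L) * Rn + lam^-1 * (Num.sqrt L * (s * Rn)) by ring.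
by lra.
Qed.

Lemma multiplier_residual_le l (c L B s D Rn : R) (p0 pk ph : 'cV[R]_l) :
  0 < c -> 0 < L -> 0 <= B -> enorm (pk - ph) <= c * (B * D) ->
  Num.sqrt L * D <= s * Rn ->
  enorm (c^-1 *: (p0 - ph)) <= B * s / Num.sqrt L * Rn + c^-1 * enorm (pk - p0).
Proof.
move=> c0 L0 B0 gap step; have sL : 0 < Num.sqrt L by rewrite sqrtr_gt0.
have ic : 0 <= c^-1 by rewrite invr_ge0 ltW.
have Dle : D <= s / Num.sqrt L * Rn by rewrite mulrAC ler_pdivlMr // mulrC.
rewrite enormZ (ger0_norm ic) (addrC (B * s / _ * Rn)).
rewrite -[X in _ <= _ + X](mulKf (lt0r_neq0 c0)) -mulrDr.
apply: ler_wpM2l => //; apply: le_trans (enormDB _ pk _) _; rewrite enormB lerD2l.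
apply: le_trans gap _; apply: ler_wpM2l; first exact: ltW.
by have := ler_wpM2l B0 Dle; lra.
Qed.

End ResidualBounds.

Theorem proposition3p3 (R : realType) (n l : nat)
  (* data of the problem *)
  (f : 'cV[R]_n -> R) (gradf : 'cV[R]_n -> 'cV[R]_n)
  (H : set 'cV[R]_n) (h : 'cV[R]_n -> R) (Kh mf Lf : R)
  (g : 'cV[R]_n -> 'cV[R]_l) (Dg : 'cV[R]_n -> 'M[R]_(n, l)) (Lg : R)
  (K : set 'cV[R]_l)
  (* K is a nonempty closed convex cone *)
  (HK : closed_convex_cone K)
  (* (B1): h = ext H h is proper, lsc, convex, Kh-Lipschitz on its compact domain H *)
  (HB1ne : H !=set0) (HB1cpt : compact H)
  (HB1lsc : lower_semicontinuous (ext H h))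
  (HB1cvxH : forall z z' t, H z -> H z' -> 0 <= t <= 1 -> H (t *: z' + (1 - t) *: z))
  (HB1cvxh : forall z z' t, H z -> H z' -> 0 <= t <= 1 ->
     h (t *: z' + (1 - t) *: z) <= t * h z' + (1 - t) * h z)
  (HKh : 0 < Kh)
  (HB1lip : forall z z', H z -> H z' -> `|h z' - h z| <= Kh * enorm (z' - z))
  (* (B2) *)
  (HB2diff : exists U : set 'cV[R]_n, [/\ open U, H `<=` U &
                forall z, U z -> has_grad f (gradf z) z])
  (Hmf : 0 < mf) (HLf : 0 < Lf)
  (HB2low : forall z z', H z -> H z' ->
     f z' - f z - dotv (gradf z) (z' - z) >= - (mf / 2) * enorm (z' - z) ^+ 2)
  (HB2lip : forall z z', H z -> H z' ->
     enorm (gradf z' - gradf z) <= Lf * enorm (z' - z))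
  (* (B3) *)
  (HB3cvx : forall z z' t, 0 <= t <= 1 ->
     negset K (g (t *: z' + (1 - t) *: z) - t *: g z' - (1 - t) *: g z))
  (HB3diff : forall z, has_tjac g (Dg z) z)
  (HLg : 0 < Lg)
  (HB3lip : forall z z', opnorm (Dg z' - Dg z) <= Lg * enorm (z' - z))
  (* iteration data *)
  (lam c sigma : R) (p0 : 'cV[R]_l) (z0 z v : 'cV[R]_n) (eps : R)
  (Hlam : 0 < lam) (Hc : 0 < c) (Hsigma : 0 < sigma) (Heps : 0 <= eps)
  (Hv : esubdiff (fun u => (lam%:E * augL f H h g K c p0 u
                            + (enorm (u - z0) ^+ 2 / 2)%:E)%E) eps z v)
  (Herr : enorm v ^+ 2 + 2 * eps <= sigma ^+ 2 * enorm (v + z0 - z) ^+ 2)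
  (zhat : 'cV[R]_n) :
  let Lpsi := lam * Lambda H g Dg Lf Lg c p0 + 1 in
  let delta := eps / lam in
  let r := v + z0 - z in
  let gL := gradLt gradf g Dg K c p0 in
  let obj := fun u : 'cV[R]_n =>
    ((lam * dotv (gL z) (u - z) - dotv r (u - z) + Lpsi / 2 * enorm (u - z) ^+ 2)%:E
     + lam%:E * ext H h u)%E in
  (* zhat is the argmin defining \hat z_k *)
  (forall u, (obj zhat <= obj u)%E) ->
  let w := lam^-1 *: (r + Lpsi *: (z - zhat)) in
  let pk := eproj (dual_cone K) (p0 + c *: g z) in
  let phat := eproj (dual_cone K) (p0 + c *: g zhat) in
  let qhat := c^-1 *: (p0 - phat) in
  let what := w + gL zhat - gL z in
  (* (a) *)
  ((exists u, esubdiff (ext H h) delta z u /\ w = gradf z + u + Dg z *m pk)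
   /\ enorm w <= lam^-1 * (1 + sigma * Num.sqrt Lpsi) * enorm r
   /\ delta <= (2 * lam)^-1 * sigma ^+ 2 * enorm r ^+ 2)
  /\
  (* (b) *)
  ((exists u, esubdiff (ext H h) 0 zhat u /\ what = gradf zhat + u + Dg zhat *m phat)
   /\ dotv (g zhat + qhat) phat = 0
   /\ negset K (g zhat + qhat)
   /\ dual_cone K phat
   /\ enorm what <= lam^-1 * (1 + 2 * sigma * Num.sqrt Lpsi) * enorm r
   /\ enorm qhat <= Bg1 H Dg * sigma / Num.sqrt Lpsi * enorm r
                    + c^-1 * enorm (pk - p0)).
Proof.
move=> Lpsi delta r gL obj zhat_min w pk phat qhat what.
have f_diff x : H x -> has_grad f (gradf x) x.
  by case: HB2diff => U [_ HU fU] /HU; exact: fU.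
have [Lf0 Lg0] := (ltW HLf, ltW HLg).
have Lam0 := Lambda_ge0 HB1ne HB1cpt Lf0 HB3diff Lg0 HB3lip p0 (ltW Hc).
have Lpsi_gt0 : 0 < Lpsi by rewrite ltr_wpDl // mulr_ge0 // ltW.
(* [z] and [\hat z] lie in [H]; [u = w - grad Ltilde(z)] is a subgradient at
   [\hat z] and, by the inexactness criterion, a [delta]-subgradient at [z] *)
have Hz : H z := inexact_prox_dom HB1ne Hlam Hv.
have Hzh : H zhat := argmin_in_dom Hlam HB1ne zhat_min.
have u_sub : esubdiff (ext H h) 0 zhat (w - gL z) :=
  prox_linear_subgrad HB1cvxH HB1cvxh Hlam HB1ne zhat_min.
have [step u_approx] := inexact_prox_linear_step HK HB1ne HB1cpt HB1cvxH f_diff Lf0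
  HB2lip HB3diff Lg0 HB3lip Hlam Hc Hz Hzh Hv u_sub.
have step_r : Num.sqrt Lpsi * enorm (zhat - z) <= sigma * enorm r :=
  step_le_residual Lpsi_gt0 Hsigma (enorm_ge0 _) (enorm_ge0 _) step Herr.
have w_le : enorm w <= lam^-1 * (1 + sigma * Num.sqrt Lpsi) * enorm r.
  by apply: prox_residual_le; rewrite // enormB.
have [kkt_orth kkt_neg kkt_dual] := projected_multiplier_kkt HK p0 (g zhat) Hc.
split; split.
- by exists (w - gL z); split; last exact: gradLt_decomp.
- by split; last exact: error_le_residual Hlam Herr.
- by exists (w - gL z); split; last exact: gradLt_shift.
- do 3 split => //; split.
  + rewrite /what -addrA.
    apply: (perturbed_residual_le Hlam erefl Lam0 (enorm_ge0 _) w_le _ step_r).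
    exact (gradLt_lip HK HB1ne HB1cpt HB1cvxH HB2lip HB3diff Lg0 HB3lip p0 (ltW Hc) Hz Hzh).
  + have gap := multiplier_gap HK HB1ne HB1cpt HB1cvxH HB3diff Lg0 HB3lip p0 (ltW Hc) Hz Hzh.
    exact (multiplier_residual_le p0 Hc Lpsi_gt0 (Bg1_ge0 HB1ne HB1cpt Lg0 HB3lip) gap step_r).
Qed.
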